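(* Let $m=(m_1,m_2)\in\mathbb{R}^2$ with $m_1>0$ and $m_2\geq 0$. Let $b_1\in\mathbb{R}$, $b_2\in\mathbb{Z}$, and $L_1,L_2$ positive integers with $L_1\geq \frac{m_2}{m_1}+1$. Then the set $$P(b_1,b_2,L_1,L_2)=\Big\{x\in\mathbb{Z}^2:\ 0\leq \tfrac{m}{m_1}\cdot(x-b)<L_1,\ 0\leq x_2-b_2<L_2\Big\},\qquad b=(b_1,b_2),$$ is connected as a subgraph of the nearest-neighbor graph of $\mathbb{Z}^2$.
   Context: Two points of $\mathbb{Z}^2$ are neighbors if they differ by $\pm e_1$ or $\pm e_2$; a subset is connected if the induced subgraph is connected. *)

From Stdlib Require Import Reals ZArith Relations.
Open Scope R_scope.

Definition pt := (Z * Z)%type.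

Definition zadj (u v : pt) : Prop :=
  (fst v = fst u + 1 /\ snd v = snd u)%Z \/
  (fst v = fst u - 1 /\ snd v = snd u)%Z \/
  (fst v = fst u /\ snd v = snd u + 1)%Z \/
  (fst v = fst u /\ snd v = snd u - 1)%Z.

Definition induced_adj (S : pt -> Prop) (u v : pt) : Prop :=
  S u /\ S v /\ zadj u v.

Definition connectedZ2 (S : pt -> Prop) : Prop :=
  (exists x, S x) /\
  forall x y, S x -> S y -> clos_refl_trans pt (induced_adj S) x y.

Definition Pset (m1 m2 b1 : R) (b2 L1 L2 : Z) (x : pt) : Prop :=
  let d := (m1 * (IZR (fst x) - b1) + m2 * (IZR (snd x) - IZR b2)) / m1 in
  0 <= d < IZR L1 /\ (0 <= snd x - b2 < L2)%Z.

From Stdlib Require Import Reals ZArith Relations Lra Lia.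
Open Scope R_scope.

(* A set of lattice points is connected as soon as each of its rows is an
   interval, its rows form an interval of heights, and between any two
   consecutive rows there is a vertical edge: walk along rows and climb the
   vertical edges.  In [P], the row at height [y] is the set of integers in a
   half-open interval of length [L1 >= 1] starting at [row_start y], which
   decreases by [m2/m1 <= L1 - 1] per row; so the point at abscissa
   [ceil (row_start y)] lies in row [y] and, directly above it, in row [y + 1]. *)

Lemma clos_rt_sym (A : Type) (R : relation A) :
  symmetric A R -> symmetric A (clos_refl_trans A R).
Proof.
  intros HR x y H; induction H.
  - apply rt_step; auto.
  - apply rt_refl.
  - eapply rt_trans; eauto.
Qed.

Section RowConvexLadder.

Local Open Scope Z_scope.

Variable S : pt -> Prop.

Local Notation reach := (clos_refl_trans pt (induced_adj S)).

Hypothesis row_convex : forall p q z y,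
  S (p, y) -> S (q, y) -> p <= z <= q -> S (z, y).

Variables (lo hi : Z) (g : Z -> Z).
Hypothesis rows_S : forall x, S x -> lo <= snd x < hi.
Hypothesis S_g : forall y, lo <= y < hi -> S (g y, y).
Hypothesis S_g_up : forall y, lo <= y -> y + 1 < hi -> S (g y, y + 1).

Lemma reach_sym u v : reach u v -> reach v u.
Proof.
  apply clos_rt_sym.
  unfold induced_adj, zadj; intros a b [Ha [Hb Hab]]; repeat split; auto; lia.
Qed.

Lemma reach_row_right p y :
  S (p, y) -> forall q, p <= q -> S (q, y) -> reach (p, y) (q, y).
Proof.
  intros Hp; apply (Z.le_ind (fun q => S (q, y) -> reach (p, y) (q, y))).
  - intros a b ->; reflexivity.
  - intros _; apply rt_refl.
  - intros q Hpq IH Hq'.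
    assert (Hq : S (q, y)) by (apply (row_convex p (Z.succ q)); auto; lia).
    apply rt_trans with (q, y); auto.
    apply rt_step; repeat split; auto.
    unfold zadj; simpl; lia.
Qed.

Lemma reach_row p q y : S (p, y) -> S (q, y) -> reach (p, y) (q, y).
Proof.
  intros Hp Hq; destruct (Z.le_ge_cases p q).
  - apply reach_row_right; auto.
  - apply reach_sym, reach_row_right; auto.
Qed.

Lemma reach_ladder y : lo <= y < hi -> reach (g lo, lo) (g y, y).
Proof.
  intros [Hlo Hhi]; revert Hhi.
  apply (Z.le_ind (fun y => y < hi -> reach (g lo, lo) (g y, y))) with lo; auto.
  - intros a b ->; reflexivity.
  - intros _; apply rt_refl.
  - intros z Hz IH Hz'.
    rewrite <- Z.add_1_r in *.
    apply rt_trans with (g z, z); [apply IH; lia|].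
    apply rt_trans with (g z, z + 1).
    + apply rt_step; repeat split; auto using S_g with zarith.
      unfold zadj; simpl; lia.
    + apply reach_row; auto with zarith.
Qed.

Lemma reach_ladder_base x : S x -> reach x (g lo, lo).
Proof.
  intros Hx; destruct x as [x1 x2].
  pose proof (rows_S _ Hx) as Hrow; simpl in Hrow.
  apply rt_trans with (g x2, x2).
  - apply reach_row; auto.
  - apply reach_sym, reach_ladder; auto.
Qed.

Lemma connectedZ2_ladder : lo < hi -> connectedZ2 S.
Proof.
  intros Hlohi; split.
  - exists (g lo, lo); apply S_g; lia.
  - intros x y Hx Hy; apply rt_trans with (g lo, lo).
    + apply reach_ladder_base; auto.
    + apply reach_sym, reach_ladder_base; auto.
Qed.

End RowConvexLadder.

(* [up] is Stdlib's (strict) integer ceiling: [a < up a <= a + 1]. *)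
Definition ceilZ (a : R) : Z := (- (up (- a) - 1))%Z.

Lemma ceilZ_spec a : a <= IZR (ceilZ a) < a + 1.
Proof.
  unfold ceilZ; destruct (archimed (- a)) as [H1 H2].
  rewrite opp_IZR, minus_IZR; lra.
Qed.

Section Parallelogram.

Variables (m1 m2 b1 : R) (b2 L1 L2 : Z).
Hypothesis hm1 : 0 < m1.

Local Notation P := (Pset m1 m2 b1 b2 L1 L2).
Local Notation r := (m2 / m1).

Definition row_start (y : Z) : R := b1 - r * (IZR y - IZR b2).

Lemma Pset_iff x1 y :
  P (x1, y) <-> 0 <= IZR x1 - row_start y < IZR L1 /\ (0 <= y - b2 < L2)%Z.
Proof.
  unfold Pset, row_start; simpl.
  replace ((m1 * (IZR x1 - b1) + m2 * (IZR y - IZR b2)) / m1)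
    with (IZR x1 - (b1 - r * (IZR y - IZR b2))) by (field; lra).
  tauto.
Qed.

Lemma Pset_row_convex p q z y :
  P (p, y) -> P (q, y) -> (p <= z <= q)%Z -> P (z, y).
Proof.
  rewrite !Pset_iff; intros Hp Hq Hz.
  assert (IZR p <= IZR z <= IZR q) by (split; apply IZR_le; lia).
  split; [lra | lia].
Qed.

Lemma Pset_rows x : P x -> (b2 <= snd x < b2 + L2)%Z.
Proof. destruct x; rewrite Pset_iff; simpl; lia. Qed.

Hypothesis hL1 : (0 < L1)%Z.

Lemma Pset_ceil_row_start y :
  (b2 <= y < b2 + L2)%Z -> P (ceilZ (row_start y), y).
Proof.
  intros Hy; rewrite Pset_iff.
  pose proof (ceilZ_spec (row_start y)).
  assert (1 <= IZR L1) by (apply IZR_le; lia).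
  split; [lra | lia].
Qed.

Hypothesis hm2 : 0 <= m2.
Hypothesis hL1m : IZR L1 >= r + 1.

(* The row above starts [r] earlier, and [r + 1 <= L1] keeps [ceil] inside. *)
Lemma Pset_ceil_row_start_up y :
  (b2 <= y)%Z -> (y + 1 < b2 + L2)%Z -> P (ceilZ (row_start y), y + 1)%Z.
Proof.
  intros Hy Hy'; rewrite Pset_iff.
  pose proof (ceilZ_spec (row_start y)).
  assert (0 <= r) by (apply Rmult_le_pos; [lra | left; apply Rinv_0_lt_compat; lra]).
  assert (row_start (y + 1) = row_start y - r) as ->
    by (unfold row_start; rewrite plus_IZR; ring).
  split; [lra | lia].
Qed.

End Parallelogram.

Theorem mainTheorem5 (m1 m2 b1 : R) (b2 L1 L2 : Z)
  (hm1 : 0 < m1) (hm2 : 0 <= m2)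
  (hL1 : (0 < L1)%Z) (hL2 : (0 < L2)%Z)
  (hL1m : IZR L1 >= m2 / m1 + 1) :
  connectedZ2 (Pset m1 m2 b1 b2 L1 L2).
Proof.
  apply connectedZ2_ladder with b2 (b2 + L2)%Z
    (fun y => ceilZ (row_start m1 m2 b1 b2 y)).
  - apply Pset_row_convex; auto.
  - apply Pset_rows; auto.
  - apply Pset_ceil_row_start; auto.
  - apply Pset_ceil_row_start_up; auto.
  - lia.
Qed.
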